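(* If $\mathcal C$ is an infinite almost disjoint family of functions from $\omega$ to $\omega$ (each function viewed as a subset of $\omega\times\omega$), then $\bigcup\mathcal C$ is fat.
   Context: A set $F\subseteq\omega\times\omega$ is fat iff $\limsup_{n}|\pi_nF|=\omega$, where $\pi_nF=\{j:(n,j)\in F\}$; i.e. for every $m<\omega$ there are infinitely many $n$ with $|\pi_nF|>m$. An almost disjoint family is a collection of infinite sets whose pairwise intersections are finite. *)

From Stdlib Require Import List Arith.
Import ListNotations.

Definition finite_nat (A : nat -> Prop) : Prop :=
  exists N, forall n, A n -> n < N.

Definition finite_set {T : Type} (X : T -> Prop) : Prop :=
  exists l : list T, forall x, X x -> In x l.

Definition graph (f : nat -> nat) : nat * nat -> Prop :=
  fun p => snd p = f (fst p).

(* Almost disjoint family: pairwise intersections of distinct members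
   are finite (members, being graphs of functions, are infinite). *)
Definition almost_disjoint_fun (C : (nat -> nat) -> Prop) : Prop :=
  forall f g, C f -> C g -> f <> g ->
    finite_set (fun p => graph f p /\ graph g p).

Definition bigunion (C : (nat -> nat) -> Prop) : nat * nat -> Prop :=
  fun p => exists f, C f /\ graph f p.

Definition pi_sec (n : nat) (F : nat * nat -> Prop) : nat -> Prop :=
  fun j => F (n, j).

Definition card_gt (A : nat -> Prop) (m : nat) : Prop :=
  exists l : list nat, NoDup l /\ length l = S m /\ forall j, In j l -> A j.

Definition fat (F : nat * nat -> Prop) : Prop :=
  forall m, ~ finite_nat (fun n => card_gt (pi_sec n F) m).

(* Fix m and choose m+1 distinct members f_0, ..., f_m of the infinite family.
   Any two of them agree at only finitely many arguments, so from some n on the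
   values f_0 n, ..., f_m n are pairwise distinct, and all of them lie in the
   n-th section of the union. *)

From Stdlib Require Import List Arith Lia Classical.
Import ListNotations.

Definition eventually (P : nat -> Prop) : Prop :=
  exists N, forall n, N <= n -> P n.

Lemma eventually_mono (P Q : nat -> Prop) :
  (forall n, P n -> Q n) -> eventually P -> eventually Q.
Proof.
  intros PQ [N HN]. exists N. intros n Hn. apply PQ, HN, Hn.
Qed.

Lemma eventually_Forall {A : Type} (P : A -> nat -> Prop) (l : list A) :
  (forall x, In x l -> eventually (P x)) ->
  eventually (fun n => forall x, In x l -> P x n).
Proof.
  induction l as [|a l IH]; intros Hl.
  - exists 0. intros n _ x [].
  - destruct (Hl a (or_introl eq_refl)) as [Na HNa].
    destruct IH as [N HN]. { intros x Hx. apply Hl. right. exact Hx. }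
    exists (max Na N). intros n Hn x [<-|Hx].
    + apply HNa. lia.
    + apply HN; [lia|exact Hx].
Qed.

Lemma eventually_not_finite_nat (P : nat -> Prop) :
  eventually P -> ~ finite_nat P.
Proof.
  intros [N HN] [M HM].
  specialize (HM (max N M) (HN _ (Nat.le_max_l N M))). lia.
Qed.

Lemma finite_set_fst_bounded {B : Type} (X : nat * B -> Prop) :
  finite_set X -> exists N, forall p, X p -> fst p < N.
Proof.
  intros [l Hl].
  assert (Hbound : exists N, forall p, In p l -> fst p < N).
  { clear Hl. induction l as [|a l [N HN]].
    - exists 0. intros p [].
    - exists (S (max N (fst a))). intros p [<-|Hp]; [lia|].
      specialize (HN p Hp). lia. }
  destruct Hbound as [N HN]. exists N. intros p Xp. apply HN, Hl, Xp.
Qed.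

Lemma finite_graph_meet_eventually_neq (f g : nat -> nat) :
  finite_set (fun p => graph f p /\ graph g p) -> eventually (fun n => f n <> g n).
Proof.
  intros fin. destruct (finite_set_fst_bounded _ fin) as [N HN].
  exists N. intros n Hn E.
  specialize (HN (n, f n) (conj eq_refl E)). simpl in HN. lia.
Qed.

Lemma eventually_NoDup_values {A : Type} (fs : list (nat -> A)) :
  (forall f g, In f fs -> In g fs -> f <> g -> eventually (fun n => f n <> g n)) ->
  NoDup fs -> eventually (fun n => NoDup (map (fun f => f n) fs)).
Proof.
  intros Hneq ND.
  assert (Hsep : eventually (fun n => forall f, In f fs -> forall g, In g fs ->
                                        f <> g -> f n <> g n)).
  { apply (eventually_Forall (fun f n => forall g, In g fs -> f <> g -> f n <> g n)).
    intros f Hf.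
    apply (eventually_Forall (fun g n => f <> g -> f n <> g n)). intros g Hg.
    destruct (classic (f = g)) as [<-|fg].
    - exists 0. intros n _ ff. now contradiction ff.
    - apply (eventually_mono (fun n => f n <> g n)); [tauto|].
      exact (Hneq f g Hf Hg fg). }
  revert Hsep. apply eventually_mono. intros n sep.
  apply NoDup_map_NoDup_ForallPairs; [|exact ND].
  intros f g Hf Hg E. apply NNPP. intros fg. exact (sep f Hf g Hg fg E).
Qed.

Lemma not_finite_set_NoDup_list {T : Type} (C : T -> Prop) :
  ~ finite_set C ->
  forall k, exists l, NoDup l /\ length l = k /\ forall x, In x l -> C x.
Proof.
  intros inf k. induction k as [|k [l [ND [Len Cl]]]].
  - exists []. repeat split; [constructor | intros x []].
  - assert (Hnew : exists x, C x /\ ~ In x l).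
    { apply NNPP. intros Hno. apply inf. exists l. intros x Cx.
      apply NNPP. intros Nx. apply Hno. exists x. auto. }
    destruct Hnew as [x [Cx Nx]].
    exists (x :: l). repeat split.
    + constructor; assumption.
    + simpl. congruence.
    + intros y [<-|Hy]; auto.
Qed.

Theorem lemma2p2 (C : (nat -> nat) -> Prop) :
  ~ finite_set C -> almost_disjoint_fun C -> fat (bigunion C).
Proof.
  intros inf ad m.
  destruct (not_finite_set_NoDup_list C inf (S m)) as [fs [ND [Len Cfs]]].
  apply eventually_not_finite_nat.
  apply (eventually_mono (fun n => NoDup (map (fun f => f n) fs))).
  - intros n NDn. exists (map (fun f => f n) fs). repeat split.
    + exact NDn.
    + rewrite length_map. exact Len.
    + intros j Hj. apply in_map_iff in Hj. destruct Hj as [f [<- Hf]].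
      exists f. split; [apply Cfs, Hf | reflexivity].
  - apply eventually_NoDup_values; [|exact ND].
    intros f g Hf Hg fg. apply finite_graph_meet_eventually_neq, ad; auto.
Qed.
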